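(* Let $\sigma\in\{1,-1\}$, $L>0$, $T>0$, $\Omega=[0,L]\times[0,T]$, and let $q_1,q_2$ be smooth complex-valued solutions on $\Omega$ of $$iq_{jt}+q_{jxx}-2\sigma(|q_1|^2+|q_2|^2)q_j=0,\qquad j=1,2.$$ With $s(k)$, $S(k)$, $S_L(k)$, $M_n$ and $S_n$ as defined below, set $\mathcal{A}(k)=s(k)\,e^{-ikL\hat\Lambda}S_L(k)=(\mathcal{A}_{ij})_{i,j=1}^3$. Then, for $k\in D_n$ (at points where $M_n$ is defined and the denominators below are nonzero), $$S_1=\begin{pmatrix}\frac{1}{m_{11}(\mathcal{A})}&\mathcal{A}_{12}&\mathcal{A}_{13}\\0&\mathcal{A}_{22}&\mathcal{A}_{23}\\0&\mathcal{A}_{32}&\mathcal{A}_{33}\end{pmatrix},\qquad S_2=\begin{pmatrix}\frac{S_{11}}{(S^Ts^A)_{11}}&s_{12}&s_{13}\\ \frac{S_{21}}{(S^Ts^A)_{11}}&s_{22}&s_{23}\\ \frac{S_{31}}{(S^Ts^A)_{11}}&s_{32}&s_{33}\end{pmatrix},$$ $$S_3=\begin{pmatrix}s_{11}&\frac{m_{33}(s)m_{21}(S)-m_{23}(s)m_{31}(S)}{(s^TS^A)_{11}}&\frac{m_{32}(s)m_{21}(S)-m_{22}(s)m_{31}(S)}{(s^TS^A)_{11}}\\ s_{21}&\frac{m_{33}(s)m_{11}(S)-m_{13}(s)m_{31}(S)}{(s^TS^A)_{11}}&\frac{m_{32}(s)m_{11}(S)-m_{12}(s)m_{31}(S)}{(s^TS^A)_{11}}\\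 s_{31}&\frac{m_{23}(s)m_{11}(S)-m_{13}(s)m_{21}(S)}{(s^TS^A)_{11}}&\frac{m_{22}(s)m_{11}(S)-m_{12}(s)m_{21}(S)}{(s^TS^A)_{11}}\end{pmatrix},$$ $$S_4=\begin{pmatrix}\mathcal{A}_{11}&0&0\\ \mathcal{A}_{21}&\frac{m_{33}(\mathcal{A})}{\mathcal{A}_{11}}&\frac{m_{32}(\mathcal{A})}{\mathcal{A}_{11}}\\ \mathcal{A}_{31}&\frac{m_{23}(\mathcal{A})}{\mathcal{A}_{11}}&\frac{m_{22}(\mathcal{A})}{\mathcal{A}_{11}}\end{pmatrix},$$ where $(S^Ts^A)_{11}=S_{11}m_{11}(s)-S_{21}m_{21}(s)+S_{31}m_{31}(s)$ and $(s^TS^A)_{11}=s_{11}m_{11}(S)-s_{21}m_{21}(S)+s_{31}m_{31}(S)$.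
   Context: Notation: $\Lambda=\mathrm{diag}(-1,1,1)$; $V_1=\begin{pmatrix}0&q_1&q_2\\ \sigma\bar q_1&0&0\\ \sigma\bar q_2&0&0\end{pmatrix}$; $V_2=2kV_1+i\Lambda(V_1^2-V_{1x})$. For a $3\times3$ matrix $X$ and scalar $\theta$, $e^{\theta\hat\Lambda}X=e^{\theta\Lambda}Xe^{-\theta\Lambda}$. $m_{ij}(X)$ is the $(i,j)$ minor of $X$ (determinant after deleting row $i$ and column $j$), and $X^A$ is the cofactor matrix with entries $(-1)^{i+j}m_{ij}(X)$; $X_{ij}$ denotes the entries of $X$. Corners: $c_1=(0,T)$, $c_2=(0,0)$, $c_3=(L,0)$, $c_4=(L,T)$. For $j=1,\dots,4$, $\mu_j(x,t,k)$ is the solution of $$\mu_j(x,t,k)=I+\int_{c_j}^{(x,t)}e^{(ik(x-x')+2ik^2(t-t'))\hat\Lambda}\big[(V_1dx'+V_2dt')\mu_j(x',t',k)\big]$$ (integral along any path in $\Omega$; the one-form is closed). Spectral functions: $s(k)=\mu_3(0,0,k)$, $S(k)=\mu_1(0,0,k)$, $S_L(k)=\mu_4(L,0,k)$. Domains: $D_1,D_2,D_3,D_4$ are the open first, second, third and fourth quadrants of the complex $k$-plane (i.e. $D_1=\{\operatorname{Re}k>0,\operatorname{Im}k>0\}$, $D_2=\{\operatorname{Re}k<0,\operatorname{Im}k>0\}$, $D_3=\{\operatorname{Re}k<0,\operatorname{Im}k<0\}$, $D_4=\{\operatorname{Re}k>0,\operatorname{Im}k<0\}$). For $n=1,\dots,4$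 and $k\in D_n$, $M_n(x,t,k)$ is the $3\times3$ matrix solution of the system $$(M_n)_{ij}(x,t,k)=\delta_{ij}+\int_{c(n,i,j)}^{(x,t)}\Big(e^{(ik(x-x')+2ik^2(t-t'))\hat\Lambda}\big[(V_1dx'+V_2dt')M_n(x',t',k)\big]\Big)_{ij},\quad i,j=1,2,3,$$ where the starting corner $c(n,i,j)=c_{\gamma}$ with $\gamma=\gamma^n_{ij}$ given by the index matrices $$\gamma^1=\begin{pmatrix}4&4&4\\2&4&4\\2&4&4\end{pmatrix},\ \gamma^2=\begin{pmatrix}3&3&3\\1&3&3\\1&3&3\end{pmatrix},\ \gamma^3=\begin{pmatrix}3&1&1\\3&3&3\\3&3&3\end{pmatrix},\ \gamma^4=\begin{pmatrix}4&2&2\\4&4&4\\4&4&4\end{pmatrix}.$$ Finally $S_n(k)=M_n(0,0,k)$ for $k\in D_n$. *)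

From Stdlib Require Import Reals.
From Coquelicot Require Import Coquelicot.

Open Scope R_scope.

Definition cexp (z : C) : C := (exp (Re z) * cos (Im z), exp (Re z) * sin (Im z)).

Local Open Scope C_scope.

(* ---------- 3x3 complex matrices, indices 1,2,3 (as in the paper) ---------- *)
Definition Mat := nat -> nat -> C.

Definition sum3 (f : nat -> C) : C := f 1%nat + f 2%nat + f 3%nat.
Definition mmul (A B : Mat) : Mat := fun i j => sum3 (fun l => A i l * B l j).
Definition madd (A B : Mat) : Mat := fun i j => A i j + B i j.
Definition idm : Mat := fun i j => if Nat.eqb i j then 1 else 0.
Definition transpose (A : Mat) : Mat := fun i j => A j i.

Definition meq (A B : Mat) : Prop :=
  forall i j, (1 <= i <= 3)%nat -> (1 <= j <= 3)%nat -> A i j = B i j.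

Definition mk3 (a11 a12 a13 a21 a22 a23 a31 a32 a33 : C) : Mat :=
  fun i j => match i, j with
  | 1, 1 => a11 | 1, 2 => a12 | 1, 3 => a13
  | 2, 1 => a21 | 2, 2 => a22 | 2, 3 => a23
  | 3, 1 => a31 | 3, 2 => a32 | 3, 3 => a33
  | _, _ => RtoC 0 end%nat.

Definition others (i : nat) : nat * nat :=
  match i with 1 => (2, 3) | 2 => (1, 3) | _ => (1, 2) end%nat.

Definition minor (X : Mat) (i j : nat) : C :=
  let (r1, r2) := others i in let (c1, c2) := others j in
  X r1 c1 * X r2 c2 - X r1 c2 * X r2 c1.

Definition cofactor (X : Mat) : Mat :=
  fun i j => if Nat.even (i + j) then minor X i j else - minor X i j.

Definition Lam (i : nat) : C := if Nat.eqb i 1 then -1 else 1.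
Definition LamM : Mat := fun i j => if Nat.eqb i j then Lam i else 0.

(* e^{theta \hat Lambda} X = e^{theta Lambda} X e^{-theta Lambda} *)
Definition hatexp (theta : C) (X : Mat) : Mat :=
  fun i j => cexp (theta * (Lam i - Lam j)) * X i j.

Definition inOmega (L T x t : R) : Prop := (0 <= x <= L)%R /\ (0 <= t <= T)%R.

Definition cont_on (L T : R) (f : R -> R -> C) : Prop :=
  forall x t, inOmega L T x t -> forall eps : R, (0 < eps)%R ->
    exists d : R, (0 < d)%R /\ forall x' t', inOmega L T x' t' ->
      (Rabs (x' - x) < d)%R -> (Rabs (t' - t) < d)%R -> (Cmod (f x' t' - f x t) < eps)%R.

Definition mcont_on (L T : R) (M : R -> R -> Mat) : Prop :=
  forall i j, (1 <= i <= 3)%nat -> (1 <= j <= 3)%nat -> cont_on L T (fun x t => M x t i j).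

(* Smoothness on Omega: D n m is the partial derivative d^n/dx^n d^m/dt^m of f = D 0 0;
   all of them exist at every point of Omega and are continuous on Omega. *)
Definition smooth_on (L T : R) (D : nat -> nat -> R -> R -> C) : Prop :=
  forall n m : nat,
    cont_on L T (D n m) /\
    forall x t, inOmega L T x t ->
      @is_derive R_AbsRing C_R_NormedModule (fun y => D n m y t) x (D (S n) m x t) /\
      @is_derive R_AbsRing C_R_NormedModule (fun s => D n m x s) t (D n (S m) x t).

(* the coupled NLS system  i q_jt + q_jxx - 2 sigma (|q1|^2+|q2|^2) q_j = 0 on Omega,
   with q_j = Qj 0 0, q_jt = Qj 0 1, q_jxx = Qj 2 0 *)
Definition nls_system (sigma L T : R) (Q1 Q2 : nat -> nat -> R -> R -> C) : Prop :=
  forall x t, inOmega L T x t ->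
    let r := RtoC (Cmod (Q1 0 0 x t)%nat ^ 2 + Cmod (Q2 0 0 x t)%nat ^ 2)%R in
    Ci * Q1 0%nat 1%nat x t + Q1 2%nat 0%nat x t - 2 * RtoC sigma * r * Q1 0%nat 0%nat x t = 0 /\
    Ci * Q2 0%nat 1%nat x t + Q2 2%nat 0%nat x t - 2 * RtoC sigma * r * Q2 0%nat 0%nat x t = 0.

Definition V1m (sigma : R) (q1 q2 : C) : Mat :=
  mk3 0 q1 q2
      (RtoC sigma * Cconj q1) 0 0
      (RtoC sigma * Cconj q2) 0 0.

Definition V1 (sigma : R) (Q1 Q2 : nat -> nat -> R -> R -> C) (x t : R) : Mat :=
  V1m sigma (Q1 0%nat 0%nat x t) (Q2 0%nat 0%nat x t).

Definition V1x (sigma : R) (Q1 Q2 : nat -> nat -> R -> R -> C) (x t : R) : Mat :=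
  V1m sigma (Q1 1%nat 0%nat x t) (Q2 1%nat 0%nat x t).

Definition V2 (sigma : R) (k : C) (Q1 Q2 : nat -> nat -> R -> R -> C) (x t : R) : Mat :=
  fun i j =>
    2 * k * V1 sigma Q1 Q2 x t i j
    + Ci * Lam i * (mmul (V1 sigma Q1 Q2 x t) (V1 sigma Q1 Q2 x t) i j
                    - V1x sigma Q1 Q2 x t i j).

Definition theta (k : C) (x t x' t' : R) : C :=
  Ci * k * RtoC (x - x') + 2 * Ci * k * k * RtoC (t - t').

Definition corner (L T : R) (j : nat) : R * R :=
  match j with 1%nat => (0%R, T) | 2%nat => (0%R, 0%R) | 3%nat => (L, 0%R) | _ => (L, T) end.

Definition RIntC (f : R -> C) (a b : R) : C := @RInt C_R_CompleteNormedModule f a b.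

(* M solves, entry by entry, the integral equation
     M_ij(x,t) = delta_ij + int_{start i j}^{(x,t)} (e^{theta hatLambda}[(V1 dx' + V2 dt') M])_ij
   where the line integral of the closed one-form is taken along both
   axis-parallel two-segment paths inside Omega (t first then x, and x first then t);
   M is moreover continuous on Omega. *)
Definition int_eq (sigma L T : R) (k : C) (Q1 Q2 : nat -> nat -> R -> R -> C)
  (start : nat -> nat -> R * R) (M : R -> R -> Mat) : Prop :=
  mcont_on L T M /\
  forall x t, inOmega L T x t ->
  forall i j, (1 <= i <= 3)%nat -> (1 <= j <= 3)%nat ->
    let x0 := fst (start i j) in
    let t0 := snd (start i j) in
    let F1 := fun x' t' => hatexp (theta k x t x' t')
                 (mmul (V1 sigma Q1 Q2 x' t') (M x' t')) i j in
    let F2 := fun x' t' => hatexp (theta k x t x' t')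
                 (mmul (V2 sigma k Q1 Q2 x' t') (M x' t')) i j in
    M x t i j = idm i j + (RIntC (fun t' => F2 x0 t') t0 t + RIntC (fun x' => F1 x' t) x0 x) /\
    M x t i j = idm i j + (RIntC (fun x' => F1 x' t0) x0 x + RIntC (fun t' => F2 x t') t0 t).

Definition is_mu (sigma L T : R) (k : C) (Q1 Q2 : nat -> nat -> R -> R -> C)
  (j : nat) (mu : R -> R -> Mat) : Prop :=
  int_eq sigma L T k Q1 Q2 (fun _ _ => corner L T j) mu.

Definition gamma (n i j : nat) : nat :=
  match n with
  | 1 => match i, j with 2, 1 | 3, 1 => 2 | _, _ => 4 end
  | 2 => match i, j with 2, 1 | 3, 1 => 1 | _, _ => 3 end
  | 3 => match i, j with 1, 2 | 1, 3 => 1 | _, _ => 3 end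
  | _ => match i, j with 1, 2 | 1, 3 => 2 | _, _ => 4 end
  end%nat.

Definition is_M (sigma L T : R) (k : C) (Q1 Q2 : nat -> nat -> R -> R -> C)
  (n : nat) (M : R -> R -> Mat) : Prop :=
  int_eq sigma L T k Q1 Q2 (fun i j => corner L T (gamma n i j)) M.

Definition inD (n : nat) (k : C) : Prop :=
  match n with
  | 1 => (0 < Re k /\ 0 < Im k)%R
  | 2 => (Re k < 0 /\ 0 < Im k)%R
  | 3 => (Re k < 0 /\ Im k < 0)%R
  | _ => (0 < Re k /\ Im k < 0)%R
  end%nat.

(* below, bare numerals are matrix indices (nat); complex constants are written RtoC _ *)
Local Open Scope nat_scope.
Local Open Scope C_scope.
Definition Amat (k : C) (L : R) (s SL : Mat) : Mat :=
  mmul s (hatexp (- (Ci * k * RtoC L)) SL).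

Definition d2 (s S : Mat) : C := mmul (transpose S) (cofactor s) 1%nat 1%nat.
Definition d3 (s S : Mat) : C := mmul (transpose s) (cofactor S) 1%nat 1%nat.

Definition denom (n : nat) (k : C) (L : R) (s S SL : Mat) : C :=
  let A := Amat k L s SL in
  match n with
  | 1%nat => minor A 1 1
  | 2%nat => d2 s S
  | 3%nat => d3 s S
  | _ => A 1 1
  end.

Definition Sformula (n : nat) (k : C) (L : R) (s S SL : Mat) : Mat :=
  let A := Amat k L s SL in
  match n with
  | 1%nat => mk3 (RtoC 1%R / minor A 1 1) (A 1 2) (A 1 3)
             (RtoC 0%R) (A 2 2) (A 2 3)
             (RtoC 0%R) (A 3 2) (A 3 3)
  | 2%nat => let d := d2 s S in
         mk3 (S 1 1 / d) (s 1 2) (s 1 3)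
             (S 2 1 / d) (s 2 2) (s 2 3)
             (S 3 1 / d) (s 3 2) (s 3 3)
  | 3%nat => let d := d3 s S in
         mk3 (s 1 1)
             ((minor s 3 3 * minor S 2 1 - minor s 2 3 * minor S 3 1) / d)
             ((minor s 3 2 * minor S 2 1 - minor s 2 2 * minor S 3 1) / d)
             (s 2 1)
             ((minor s 3 3 * minor S 1 1 - minor s 1 3 * minor S 3 1) / d)
             ((minor s 3 2 * minor S 1 1 - minor s 1 2 * minor S 3 1) / d)
             (s 3 1)
             ((minor s 2 3 * minor S 1 1 - minor s 1 3 * minor S 2 1) / d)
             ((minor s 2 2 * minor S 1 1 - minor s 1 2 * minor S 2 1) / d)
  | _ => mk3 (A 1 1) (RtoC 0%R) (RtoC 0%R)
             (A 2 1) (minor A 3 3 / A 1 1) (minor A 3 2 / A 1 1)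
             (A 3 1) (minor A 2 3 / A 1 1) (minor A 2 2 / A 1 1)
  end.

(* The gauged eigenfunctions N = e^{-(ikx + 2ik^2 t) \hat Lambda} mu, which solve the integral
   equations without exponentials, satisfy N_x = W1 N and N_t = W2 N with traceless W1, W2.
   Hence, for two such solutions, adj(N2) N is constant on Omega (and det N2 is constant);
   normalizing with mu2 (which is I at the origin) gives mu_j(0,0) = adj N2(c_j) and
   M_n(0,0) = mu_j(0,0) N_{M_n}(c_j) for every corner c_j, while det mu_j(0,0) = 1.
   Entries of N_{M_n}(c_j) integrated from c_j are those of I, so these matrix identities,
   read as linear equations (Cramer's rule), determine M_n(0,0). *)

From Pilot Require Import Defs.
From Stdlib Require Import Reals.
From Coquelicot Require Import Coquelicot.
From Stdlib Require Import Lra Lia FunctionalExtensionality.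

Open Scope R_scope.

Notation Cder f x l := (@is_derive R_AbsRing C_R_NormedModule f x l).
Notation Ccont f x := (@continuous R_UniformSpace C_UniformSpace f x).

Section Complex_functions.

Lemma Cder_fst (f : R -> C) x (l : C) :
  Cder f x l -> is_derive (fun y => fst (f y)) x (fst l).
Proof.
  intros H. eapply filterdiff_ext_lin.
  - apply (filterdiff_comp f (fun u : C_R_NormedModule => fst u) _ (fun u : C_R_NormedModule => fst u) H).
    apply filterdiff_linear, (@is_linear_fst R_AbsRing R_NormedModule R_NormedModule).
  - reflexivity.
Qed.

Lemma Cder_snd (f : R -> C) x (l : C) :
  Cder f x l -> is_derive (fun y => snd (f y)) x (snd l).
Proof.
  intros H. eapply filterdiff_ext_lin.
  - apply (filterdiff_comp f (fun u : C_R_NormedModule => snd u) _ (fun u : C_R_NormedModule => snd u) H).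
    apply filterdiff_linear, (@is_linear_snd R_AbsRing R_NormedModule R_NormedModule).
  - reflexivity.
Qed.

Lemma Cder_pair (f : R -> C) x (l : C) :
  is_derive (fun y => fst (f y)) x (fst l) ->
  is_derive (fun y => snd (f y)) x (snd l) -> Cder f x l.
Proof.
  intros [_ H1] [_ H2]. split; [apply is_linear_scal_l|].
  intros x' Hx' eps.
  assert (He : 0 < eps / 2) by (destruct eps; simpl; lra).
  specialize (H1 x' Hx' (mkposreal _ He)). specialize (H2 x' Hx' (mkposreal _ He)).
  generalize (filter_and _ _ H1 H2). apply filter_imp. intros y [A B]. simpl in A, B.
  change (norm (minus (minus (f y) (f x')) (scal (minus y x') l)))
    with (sqrt (norm (minus (minus (fst (f y)) (fst (f x'))) (scal (minus y x') (fst l))) ^ 2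
               + norm (minus (minus (snd (f y)) (snd (f x'))) (scal (minus y x') (snd l))) ^ 2)).
  set (a := norm (minus (minus (fst (f y)) (fst (f x'))) (scal (minus y x') (fst l)))) in *.
  set (b := norm (minus (minus (snd (f y)) (snd (f x'))) (scal (minus y x') (snd l)))) in *.
  set (n := norm (minus y x')) in *.
  assert (Ha : 0 <= a) by apply norm_ge_0.
  assert (Hb : 0 <= b) by apply norm_ge_0.
  assert (Hn : 0 <= n) by apply norm_ge_0.
  (* the Euclidean norm is at most sqrt 2 <= 2 times the max norm *)
  destruct (sqrt_plus_sqr a b) as [_ Hs].
  rewrite (Rabs_pos_eq a Ha), (Rabs_pos_eq b Hb) in Hs.
  assert (Hs2 : sqrt 2 <= 2).
  { rewrite <- (sqrt_square 2) at 2 by lra. apply sqrt_le_1_alt. lra. }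
  assert (Hm : Rmax a b <= eps / 2 * n) by (apply Rmax_lub; assumption).
  pose proof (sqrt_pos 2).
  apply Rle_trans with (1 := Hs), Rle_trans with (sqrt 2 * (eps / 2 * n)).
  - apply Rmult_le_compat_l; lra.
  - change (sqrt 2 * (eps / 2 * n) <= eps * n). pose proof (cond_pos eps).
    assert (0 <= (2 - sqrt 2) * (eps * n)) by (apply Rmult_le_pos; [lra | apply Rmult_le_pos; lra]).
    assert (eps * n - sqrt 2 * (eps / 2 * n) = (2 - sqrt 2) * (eps * n) / 2) by field.
    lra.
Qed.

Lemma Cder_mult (f g : R -> C) x df dg :
  Cder f x df -> Cder g x dg -> Cder (fun y => f y * g y)%C x (df * g x + f x * dg)%C.
Proof.
  intros Hf Hg.
  pose proof (Cder_fst _ _ _ Hf) as f1. pose proof (Cder_snd _ _ _ Hf) as f2.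
  pose proof (Cder_fst _ _ _ Hg) as g1. pose proof (Cder_snd _ _ _ Hg) as g2.
  apply Cder_pair.
  - pose proof (is_derive_minus _ _ x _ _ (is_derive_mult _ _ x _ _ f1 g1 Rmult_comm)
                                        (is_derive_mult _ _ x _ _ f2 g2 Rmult_comm)) as H.
    replace (fst (df * g x + f x * dg)%C) with
      (minus (plus (mult (fst df) (fst (g x))) (mult (fst (f x)) (fst dg)))
             (plus (mult (snd df) (snd (g x))) (mult (snd (f x)) (snd dg)))).
    + eapply is_derive_ext; [|exact H]. intros t; simpl. destruct (f t), (g t); reflexivity.
    + destruct df, dg, (f x), (g x); simpl. unfold minus, plus, opp, mult; simpl. ring.
  - pose proof (is_derive_plus _ _ x _ _ (is_derive_mult _ _ x _ _ f1 g2 Rmult_comm)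
                                       (is_derive_mult _ _ x _ _ f2 g1 Rmult_comm)) as H.
    replace (snd (df * g x + f x * dg)%C) with
      (plus (plus (mult (fst df) (snd (g x))) (mult (fst (f x)) (snd dg)))
            (plus (mult (snd df) (fst (g x))) (mult (snd (f x)) (fst dg)))).
    + eapply is_derive_ext; [|exact H]. intros t; simpl. destruct (f t), (g t); reflexivity.
    + destruct df, dg, (f x), (g x); simpl. unfold minus, plus, opp, mult; simpl. ring.
Qed.

Lemma Cder_plus (f g : R -> C) x df dg :
  Cder f x df -> Cder g x dg -> Cder (fun y => f y + g y)%C x (df + dg)%C.
Proof. intros Hf Hg. apply (is_derive_plus f g x df dg Hf Hg). Qed.

Lemma Cder_opp (f : R -> C) x df : Cder f x df -> Cder (fun y => - f y)%C x (- df)%C.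
Proof. intros Hf. apply (is_derive_opp f x df Hf). Qed.

Lemma Cder_minus (f g : R -> C) x df dg :
  Cder f x df -> Cder g x dg -> Cder (fun y => f y - g y)%C x (df - dg)%C.
Proof. intros Hf Hg. apply (is_derive_minus f g x df dg Hf Hg). Qed.

Lemma Cder_const (a : C) x : Cder (fun _ => a) x (RtoC 0).
Proof. apply (@is_derive_const R_AbsRing C_R_NormedModule). Qed.

Lemma Cder_eq (f : R -> C) x (l l' : C) : Cder f x l -> l = l' -> Cder f x l'.
Proof. intros H <-; exact H. Qed.

Lemma Ccont_pair (f : R -> C) x :
  continuous (fun y => fst (f y)) x -> continuous (fun y => snd (f y)) x -> Ccont f x.
Proof.
  intros H1 H2. apply filterlim_locally. intros eps.
  apply filterlim_locally with (eps := eps) in H1.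
  apply filterlim_locally with (eps := eps) in H2.
  generalize (filter_and _ _ H1 H2). apply filter_imp. intros y [A B]. split; assumption.
Qed.

Lemma Ccont_fst (f : R -> C) x : Ccont f x -> continuous (fun y => fst (f y)) x.
Proof. intros H. apply (continuous_comp f fst x H). destruct (f x). apply continuous_fst. Qed.

Lemma Ccont_snd (f : R -> C) x : Ccont f x -> continuous (fun y => snd (f y)) x.
Proof. intros H. apply (continuous_comp f snd x H). destruct (f x). apply continuous_snd. Qed.

Lemma Ccont_mult (f g : R -> C) x : Ccont f x -> Ccont g x -> Ccont (fun y => f y * g y)%C x.
Proof.
  intros Hf Hg.
  apply Ccont_pair; simpl;
    [apply (@continuous_minus R_UniformSpace R_AbsRing R_NormedModule)
    |apply (@continuous_plus R_UniformSpace R_AbsRing R_NormedModule)];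
    apply (@continuous_mult R_UniformSpace R_AbsRing);
    auto using Ccont_fst, Ccont_snd.
Qed.

Lemma Ccont_plus (f g : R -> C) x : Ccont f x -> Ccont g x -> Ccont (fun y => f y + g y)%C x.
Proof.
  intros Hf Hg. apply Ccont_pair; simpl;
    apply (@continuous_plus R_UniformSpace R_AbsRing R_NormedModule); auto using Ccont_fst, Ccont_snd.
Qed.

Lemma Ccont_opp (f : R -> C) x : Ccont f x -> Ccont (fun y => - f y)%C x.
Proof.
  intros Hf. apply Ccont_pair; simpl;
    apply (@continuous_opp R_UniformSpace R_AbsRing R_NormedModule); auto using Ccont_fst, Ccont_snd.
Qed.

Lemma Ccont_minus (f g : R -> C) x : Ccont f x -> Ccont g x -> Ccont (fun y => f y - g y)%C x.
Proof. intros Hf Hg. apply Ccont_plus; [|apply Ccont_opp]; assumption. Qed.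

Lemma Ccont_const (a : C) x : Ccont (fun _ => a) x.
Proof. apply continuous_const. Qed.

Lemma Ccont_conj (f : R -> C) x : Ccont f x -> Ccont (fun y => Cconj (f y)) x.
Proof.
  intros H. apply Ccont_pair; simpl.
  - apply (Ccont_fst f x H).
  - apply (@continuous_opp R_UniformSpace R_AbsRing R_NormedModule), (Ccont_snd f x H).
Qed.

Lemma Ccont_ext (f g : R -> C) x : (forall y, f y = g y) -> Ccont f x -> Ccont g x.
Proof. intros; eapply continuous_ext; eauto. Qed.

Lemma cexp_add (a b : C) : cexp (a + b)%C = (cexp a * cexp b)%C.
Proof.
  destruct a as [a1 a2], b as [b1 b2]. unfold cexp. simpl.
  rewrite exp_plus, cos_plus, sin_plus. apply injective_projections; simpl; ring.
Qed.

Lemma cexp_0 : cexp (RtoC 0) = RtoC 1.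
Proof.
  unfold cexp. simpl. rewrite exp_0, cos_0, sin_0. apply injective_projections; simpl; ring.
Qed.

Lemma cexp_affine_cont (a b : C) z : Ccont (fun y => cexp (a * RtoC y + b)%C) z.
Proof.
  apply Ccont_pair; unfold cexp; simpl;
    apply (@ex_derive_continuous R_AbsRing R_NormedModule); auto_derive; auto.
Qed.

Lemma is_RInt_Cmult (c : C) (g : R -> C) a b (I : C) :
  @is_RInt C_R_NormedModule g a b I ->
  @is_RInt C_R_NormedModule (fun y => c * g y)%C a b (c * I)%C.
Proof.
  intros H.
  pose proof (is_RInt_fct_extend_fst _ _ _ _ H) as H1.
  pose proof (is_RInt_fct_extend_snd _ _ _ _ H) as H2.
  destruct c as [c1 c2].
  replace ((c1, c2) * I)%C with
    ((minus (scal c1 (fst I)) (scal c2 (snd I)), plus (scal c1 (snd I)) (scal c2 (fst I))) : C).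
  2:{ destruct I; unfold minus, plus, opp, scal; simpl; unfold mult; simpl.
      apply injective_projections; simpl; ring. }
  apply (is_RInt_fct_extend_pair (U := R_NormedModule) (V := R_NormedModule)).
  - eapply is_RInt_ext;
      [|apply (is_RInt_minus _ _ _ _ _ _ (is_RInt_scal _ _ _ c1 _ H1) (is_RInt_scal _ _ _ c2 _ H2))].
    intros x _. cbv beta. destruct (g x); simpl.
    unfold minus, plus, opp, scal; simpl; unfold mult; simpl. ring.
  - eapply is_RInt_ext;
      [|apply (is_RInt_plus _ _ _ _ _ _ (is_RInt_scal _ _ _ c1 _ H2) (is_RInt_scal _ _ _ c2 _ H1))].
    intros x _. cbv beta. destruct (g x); simpl.
    unfold minus, plus, opp, scal; simpl; unfold mult; simpl. ring.
Qed.

Lemma RIntC_Cmult (c : C) (g : R -> C) a b :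
  @ex_RInt C_R_NormedModule g a b -> RIntC (fun y => c * g y)%C a b = (c * RIntC g a b)%C.
Proof.
  intros H. apply (@is_RInt_unique C_R_CompleteNormedModule), is_RInt_Cmult.
  apply (RInt_correct (V := C_R_CompleteNormedModule)), H.
Qed.

Lemma ex_RIntC_cont (f : R -> C) a b : (forall z, Ccont f z) -> @ex_RInt C_R_NormedModule f a b.
Proof. intros H. apply (@ex_RInt_continuous C_R_CompleteNormedModule). intros z _. apply H. Qed.

End Complex_functions.

Section Intervals.

Definition clamp (a b z : R) : R := Rmax a (Rmin b z).

Lemma clamp_in a b z : a <= b -> a <= clamp a b z <= b.
Proof. intros. unfold clamp, Rmax, Rmin. repeat destruct Rle_dec; lra. Qed.

Lemma clamp_id a b z : a <= z <= b -> clamp a b z = z.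
Proof. intros. unfold clamp, Rmax, Rmin. repeat destruct Rle_dec; lra. Qed.

Lemma clamp_lip a b z w : a <= b -> Rabs (clamp a b z - clamp a b w) <= Rabs (z - w).
Proof.
  intros. unfold clamp, Rmax, Rmin.
  repeat destruct Rle_dec; unfold Rabs; repeat destruct Rcase_abs; lra.
Qed.

Lemma clamp_cont a b z : a <= b -> continuous (clamp a b) z.
Proof.
  intros Hab. apply filterlim_locally. intros eps. exists eps. intros y Hy.
  unfold ball in *; simpl in *; unfold AbsRing_ball, abs, minus, plus, opp in *; simpl in *.
  eapply Rle_lt_trans; [apply clamp_lip | exact Hy]; lra.
Qed.

Lemma ball_of_Cmod (u v : C) (eps : posreal) : Cmod (v - u)%C < eps -> ball u eps v.
Proof.
  intros H. pose proof (Rmax_Cmod (v - u)%C) as H1.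
  destruct u as [u1 u2], v as [v1 v2]. simpl in H1.
  split; simpl; unfold AbsRing_ball, minus, plus, opp, abs; simpl;
    apply Rle_lt_trans with (2 := H); eapply Rle_trans; [|exact H1 | |exact H1];
    [apply Rmax_l | apply Rmax_r].
Qed.

(* Clamping extends a function continuous on [0,L] to a function continuous on all of R. *)
Lemma cont_on_slice_x L T (F : R -> R -> C) t z :
  0 <= L -> 0 <= t <= T -> cont_on L T F -> Ccont (fun y => F (clamp 0 L y) t) z.
Proof.
  intros HL Ht HF. apply filterlim_locally. intros eps.
  assert (Hz : inOmega L T (clamp 0 L z) t) by (split; [apply clamp_in; lra | lra]).
  destruct (HF _ _ Hz eps (cond_pos eps)) as [d [Hd Hd']].
  exists (mkposreal d Hd). intros y Hy. apply ball_of_Cmod, Hd'.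
  - split; [apply clamp_in; lra | lra].
  - eapply Rle_lt_trans; [apply clamp_lip; lra | exact Hy].
  - rewrite Rminus_eq_0, Rabs_R0. exact Hd.
Qed.

Lemma cont_on_slice_t L T (F : R -> R -> C) x z :
  0 <= T -> 0 <= x <= L -> cont_on L T F -> Ccont (fun s => F x (clamp 0 T s)) z.
Proof.
  intros HT Hx HF. apply filterlim_locally. intros eps.
  assert (Hz : inOmega L T x (clamp 0 T z)) by (split; [lra | apply clamp_in; lra]).
  destruct (HF _ _ Hz eps (cond_pos eps)) as [d [Hd Hd']].
  exists (mkposreal d Hd). intros y Hy. apply ball_of_Cmod, Hd'.
  - split; [lra | apply clamp_in; lra].
  - rewrite Rminus_eq_0, Rabs_R0. exact Hd.
  - eapply Rle_lt_trans; [apply clamp_lip; lra | exact Hy].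
Qed.

Lemma locally_open_interval a b z : a < z < b -> locally z (fun w => a < w < b).
Proof. intros Hz. apply (open_and _ _ (open_gt a) (open_lt b)), Hz. Qed.

Lemma const_of_derive_0 (f : R -> R) a b :
  a < b -> (forall z, continuous (fun y => f (clamp a b y)) z) ->
  (forall y, a < y < b -> is_derive f y 0) -> forall y, a <= y <= b -> f y = f a.
Proof.
  intros Hab Hc Hd y Hy.
  destruct (Req_dec y a) as [->|Hya]; [reflexivity|].
  destruct (MVT_gen (fun z => f (clamp a b z)) a y (fun _ => 0)) as [c [_ Hc']].
  - intros z Hz. rewrite Rmin_left in Hz by lra. rewrite Rmax_right in Hz by lra.
    eapply is_derive_ext_loc; [|apply (Hd z); lra].
    generalize (locally_open_interval a b z ltac:(lra)). apply filter_imp.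
    intros w Hw. rewrite clamp_id; lra.
  - intros z _. apply continuity_pt_filterlim, Hc.
  - rewrite !clamp_id in Hc' by lra. lra.
Qed.

Lemma Cconst_of_derive_0 (h : R -> C) a b :
  a < b -> (forall z, Ccont (fun y => h (clamp a b y)) z) ->
  (forall y, a < y < b -> Cder h y (RtoC 0)) -> forall y, a <= y <= b -> h y = h a.
Proof.
  intros Hab Hc Hd y Hy. apply injective_projections.
  - apply (const_of_derive_0 (fun z => fst (h z)) a b Hab); auto.
    + intros z. apply (Ccont_fst (fun y => h (clamp a b y))), Hc.
    + intros z Hz. apply (Cder_fst h z (RtoC 0)). auto.
  - apply (const_of_derive_0 (fun z => snd (h z)) a b Hab); auto.
    + intros z. apply (Ccont_snd (fun y => h (clamp a b y))), Hc.
    + intros z Hz. apply (Cder_snd h z (RtoC 0)). auto.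
Qed.

Lemma RIntC_Cmult_ext (e : C) (F Fc : R -> C) a b lo hi :
  (forall z, Ccont Fc z) -> lo <= a <= hi -> lo <= b <= hi ->
  (forall u, lo <= u <= hi -> F u = Fc u) ->
  RIntC (fun u => e * F u)%C a b = (e * RIntC Fc a b)%C.
Proof.
  intros Hc Ha Hb HF.
  assert (Hin : forall u, Rmin a b < u < Rmax a b -> lo <= u <= hi)
    by (intros u; unfold Rmin, Rmax; destruct Rle_dec; lra).
  rewrite RIntC_Cmult.
  - f_equal. apply (@RInt_ext C_R_CompleteNormedModule). auto.
  - apply (ex_RInt_ext Fc); [intros u Hu; symmetry; auto | apply ex_RIntC_cont, Hc].
Qed.

Lemma Cder_RIntC_loc (f G : R -> C) (K : C) a x :
  (forall z, Ccont G z) -> locally x (fun y => f y = K + RIntC G a y)%C -> Cder f x (G x).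
Proof.
  intros HG Hf. apply (is_derive_ext_loc (fun y => K + RIntC G a y)%C).
  - generalize Hf. apply filter_imp. intros y Hy. symmetry. exact Hy.
  - eapply Cder_eq.
    + apply Cder_plus; [apply Cder_const|].
      apply (@is_derive_RInt C_R_NormedModule G (fun b => RIntC G a b) a x); [|apply HG].
      apply filter_forall. intros b.
      apply (RInt_correct (V := C_R_CompleteNormedModule)), ex_RIntC_cont, HG.
    + ring.
Qed.

End Intervals.

Open Scope C_scope.

Notation is_index i := (1 <= i <= 3)%nat.

Section Matrices.

Definition adj (X : Mat) : Mat := fun i j => cofactor X j i.
Definition trace (V : Mat) : C := V 1%nat 1%nat + V 2%nat 2%nat + V 3%nat 3%nat.
Definition det3 (X : Mat) : C := mmul X (adj X) 1%nat 1%nat.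

(* [adj_diff X Y] is the derivative of [adj] at [X] in the direction [Y]. *)
Definition minor_diff (X Y : Mat) (i j : nat) : C :=
  let (r1, r2) := others i in let (c1, c2) := others j in
  Y r1 c1 * X r2 c2 + X r1 c1 * Y r2 c2 - (Y r1 c2 * X r2 c1 + X r1 c2 * Y r2 c1).
Definition adj_diff (X Y : Mat) : Mat :=
  fun i j => if Nat.even (j + i) then minor_diff X Y j i else - minor_diff X Y j i.

Definition MDer (F : R -> Mat) (x : R) (F' : Mat) : Prop :=
  forall i j, is_index i -> is_index j -> Cder (fun y => F y i j) x (F' i j).
Definition MCont (F : R -> Mat) (z : R) : Prop :=
  forall i j, is_index i -> is_index j -> Ccont (fun y => F y i j) z.

Lemma index_cases i : is_index i -> i = 1%nat \/ i = 2%nat \/ i = 3%nat.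
Proof. lia. Qed.

Lemma others_index i : is_index (fst (others i)) /\ is_index (snd (others i)).
Proof. destruct i as [|[|[|i]]]; simpl; lia. Qed.

Lemma MDer_mmul A B x A' B' :
  MDer A x A' -> MDer B x B' ->
  MDer (fun y => mmul (A y) (B y)) x (madd (mmul A' (B x)) (mmul (A x) B')).
Proof.
  intros HA HB i j Hi Hj. unfold mmul, sum3, madd.
  assert (I1 : is_index 1) by lia. assert (I2 : is_index 2) by lia. assert (I3 : is_index 3) by lia.
  eapply Cder_eq.
  - apply Cder_plus; [apply Cder_plus|]; apply Cder_mult; auto.
  - cbv beta. ring.
Qed.

Lemma MCont_mmul A B z : MCont A z -> MCont B z -> MCont (fun y => mmul (A y) (B y)) z.
Proof.
  intros HA HB i j Hi Hj. unfold mmul, sum3.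
  assert (I1 : is_index 1) by lia. assert (I2 : is_index 2) by lia. assert (I3 : is_index 3) by lia.
  apply Ccont_plus; [apply Ccont_plus|]; apply Ccont_mult; auto.
Qed.

Lemma MDer_adj A x A' : MDer A x A' -> MDer (fun y => adj (A y)) x (adj_diff (A x) A').
Proof.
  intros HA i j Hi Hj. unfold adj, cofactor, adj_diff, minor, minor_diff.
  pose proof (others_index i) as [Hi1 Hi2]. pose proof (others_index j) as [Hj1 Hj2].
  destruct (others i) as [c1 c2], (others j) as [r1 r2]. simpl in *.
  destruct (Nat.even (j + i)); [|apply Cder_opp];
    apply Cder_minus; apply Cder_mult; auto.
Qed.

Lemma MCont_adj A z : MCont A z -> MCont (fun y => adj (A y)) z.
Proof.
  intros HA i j Hi Hj. unfold adj, cofactor, minor.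
  pose proof (others_index i) as [Hi1 Hi2]. pose proof (others_index j) as [Hj1 Hj2].
  destruct (others i) as [c1 c2], (others j) as [r1 r2]. simpl in *.
  destruct (Nat.even (j + i)); [|apply Ccont_opp];
    apply Ccont_minus; apply Ccont_mult; auto.
Qed.

Lemma adj_diff_mul_identity (X Y V : Mat) i j : is_index i -> is_index j ->
  madd (mmul (adj_diff X (mmul V X)) Y) (mmul (adj X) (mmul V Y)) i j
  = trace V * mmul (adj X) Y i j.
Proof.
  intros Hi Hj.
  destruct (index_cases i Hi) as [-> | [-> | ->]]; destruct (index_cases j Hj) as [-> | [-> | ->]];
  unfold madd, mmul, sum3, adj_diff, adj, cofactor, minor_diff, minor, trace; simpl; ring.
Qed.

Lemma det_diff_identity (X V : Mat) :
  madd (mmul (mmul V X) (adj X)) (mmul X (adj_diff X (mmul V X))) 1%nat 1%nat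
  = trace V * det3 X.
Proof.
  unfold det3, madd, mmul, sum3, adj_diff, adj, cofactor, minor_diff, minor, trace; simpl; ring.
Qed.

Lemma mmul_meq_l A A' Y i j : meq A A' -> is_index i -> mmul A Y i j = mmul A' Y i j.
Proof. intros H Hi. unfold mmul, sum3. rewrite !H by lia. reflexivity. Qed.

Lemma mmul_meq_r A Y Y' i j : meq Y Y' -> is_index j -> mmul A Y i j = mmul A Y' i j.
Proof. intros H Hj. unfold mmul, sum3. rewrite !H by lia. reflexivity. Qed.

Lemma mmul_idm_l Y i j : is_index i -> mmul idm Y i j = Y i j.
Proof. intros Hi. destruct (index_cases i Hi) as [-> | [-> | ->]]; unfold mmul, sum3, idm; simpl; ring. Qed.

Lemma mmul_idm_r A i j : is_index j -> mmul A idm i j = A i j.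
Proof. intros Hj. destruct (index_cases j Hj) as [-> | [-> | ->]]; unfold mmul, sum3, idm; simpl; ring. Qed.

Lemma adj_meq_idm X : meq X idm -> meq (adj X) idm.
Proof.
  intros H a b Ha Hb. unfold adj, cofactor, minor.
  destruct (index_cases a Ha) as [-> | [-> | ->]]; destruct (index_cases b Hb) as [-> | [-> | ->]];
    simpl; rewrite !H by lia; unfold idm; simpl; ring.
Qed.

Lemma det3_meq X X' : meq X X' -> det3 X = det3 X'.
Proof. intros H. unfold det3, mmul, sum3, adj, cofactor, minor; simpl. rewrite !H by lia. reflexivity. Qed.

Lemma det3_adj X : det3 (adj X) = det3 X * det3 X.
Proof. unfold det3, mmul, sum3, adj, cofactor, minor; simpl. ring. Qed.

Lemma det3_idm : det3 idm = 1.
Proof. unfold det3, mmul, sum3, adj, cofactor, minor, idm; simpl. ring. Qed.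

End Matrices.

Definition lax_solution (L T : R) (W1 W2 : R -> R -> Mat) (N : R -> R -> Mat) : Prop :=
  (forall t x, (0 <= t <= T)%R -> (0 < x < L)%R -> MDer (fun y => N y t) x (mmul (W1 x t) (N x t))) /\
  (forall x t, (0 <= x <= L)%R -> (0 < t < T)%R -> MDer (fun s => N x s) t (mmul (W2 x t) (N x t))) /\
  (forall t z, (0 <= t <= T)%R -> MCont (fun y => N (clamp 0 L y) t) z) /\
  (forall x z, (0 <= x <= L)%R -> MCont (fun s => N x (clamp 0 T s)) z).

Section Lax_invariants.

Variables (L T : R) (W1 W2 : R -> R -> Mat).
Hypothesis HL : (0 < L)%R.
Hypothesis HT : (0 < T)%R.
Hypothesis trace_W1 : forall x t, (0 <= x <= L)%R -> (0 <= t <= T)%R -> trace (W1 x t) = 0.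
Hypothesis trace_W2 : forall x t, (0 <= x <= L)%R -> (0 <= t <= T)%R -> trace (W2 x t) = 0.

(* For traceless [W], [adj N2] solves the adjoint equation [(adj N2)' = - adj N2 W]. *)
Lemma lax_adj_mul_const (N2 N : R -> R -> Mat) :
  lax_solution L T W1 W2 N2 -> lax_solution L T W1 W2 N ->
  forall x t i j, (0 <= x <= L)%R -> (0 <= t <= T)%R -> is_index i -> is_index j ->
  mmul (adj (N2 x t)) (N x t) i j = mmul (adj (N2 0%R 0%R)) (N 0%R 0%R) i j.
Proof.
  intros [A1 [A2 [A3 A4]]] [B1 [B2 [B3 B4]]] x t i j Hx Ht Hi Hj.
  transitivity (mmul (adj (N2 0%R t)) (N 0%R t) i j).
  - apply (Cconst_of_derive_0 (fun y => mmul (adj (N2 y t)) (N y t) i j) 0 L HL); auto.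
    + intros z. apply (MCont_mmul (fun y => adj (N2 (clamp 0 L y) t))); auto.
      apply MCont_adj. auto.
    + intros y Hy. eapply Cder_eq.
      * apply (MDer_mmul (fun y => adj (N2 y t))); auto. apply MDer_adj. auto.
      * rewrite adj_diff_mul_identity, trace_W1 by (auto; lra). ring.
  - apply (Cconst_of_derive_0 (fun s => mmul (adj (N2 0%R s)) (N 0%R s) i j) 0 T HT); [| |lra].
    + intros z. assert (H0 : (0 <= 0 <= L)%R) by lra.
      apply (MCont_mmul (fun s => adj (N2 0%R (clamp 0 T s)))); auto using MCont_adj.
    + intros y Hy. assert (H0 : (0 <= 0 <= L)%R) by lra. eapply Cder_eq.
      * apply (MDer_mmul (fun s => adj (N2 0%R s))); auto using MDer_adj.
      * rewrite adj_diff_mul_identity, trace_W2 by (auto; lra). ring.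
Qed.

Lemma lax_det_const (N : R -> R -> Mat) : lax_solution L T W1 W2 N ->
  forall x t, (0 <= x <= L)%R -> (0 <= t <= T)%R -> det3 (N x t) = det3 (N 0%R 0%R).
Proof.
  intros [A1 [A2 [A3 A4]]] x t Hx Ht. unfold det3.
  assert (I1 : is_index 1) by lia.
  transitivity (mmul (N 0%R t) (adj (N 0%R t)) 1%nat 1%nat).
  - apply (Cconst_of_derive_0 (fun y => mmul (N y t) (adj (N y t)) 1%nat 1%nat) 0 L HL); auto.
    + intros z. apply (MCont_mmul (fun y => N (clamp 0 L y) t)); auto. apply MCont_adj. auto.
    + intros y Hy. eapply Cder_eq.
      * apply (MDer_mmul (fun y => N y t)); auto. apply MDer_adj. auto.
      * rewrite det_diff_identity, trace_W1 by lra. ring.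
  - apply (Cconst_of_derive_0 (fun s => mmul (N 0%R s) (adj (N 0%R s)) 1%nat 1%nat) 0 T HT); [| |lra].
    + intros z. assert (H0 : (0 <= 0 <= L)%R) by lra.
      apply (MCont_mmul (fun s => N 0%R (clamp 0 T s))); auto using MCont_adj.
    + intros y Hy. assert (H0 : (0 <= 0 <= L)%R) by lra. eapply Cder_eq.
      * apply (MDer_mmul (fun s => N 0%R s)); auto using MDer_adj.
      * rewrite det_diff_identity, trace_W2 by lra. ring.
Qed.

End Lax_invariants.

(* [gauge_conj k x t X] is [e^{-(ikx + 2ik^2 t) \hat Lambda} X]; applied to [M] and to the
   Lax matrices it removes the exponential factors from the integral equations. *)
Definition phase (k : C) (x t : R) : C := Ci * k * RtoC x + 2 * Ci * k * k * RtoC t.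
Definition gauge (k : C) (x t : R) (i j : nat) : C := cexp (- (phase k x t * (Lam i - Lam j))).
Definition gauge_conj (k : C) (x t : R) (X : Mat) : Mat := fun i j => gauge k x t i j * X i j.

Definition gauged (k : C) (M : R -> R -> Mat) (x t : R) : Mat := gauge_conj k x t (M x t).
Definition gauged_V1 (sigma : R) (k : C) (Q1 Q2 : nat -> nat -> R -> R -> C) (x t : R) : Mat :=
  gauge_conj k x t (V1 sigma Q1 Q2 x t).
Definition gauged_V2 (sigma : R) (k : C) (Q1 Q2 : nat -> nat -> R -> R -> C) (x t : R) : Mat :=
  gauge_conj k x t (V2 sigma k Q1 Q2 x t).

Section Gauge.

Lemma theta_phase k x t x' t' : theta k x t x' t' = phase k x t - phase k x' t'.
Proof. unfold theta, phase. rewrite !RtoC_minus. ring. Qed.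

Lemma gauge_mul k x t i l j : gauge k x t i l * gauge k x t l j = gauge k x t i j.
Proof. unfold gauge. rewrite <- cexp_add. f_equal. ring. Qed.

Lemma gauge_diag k x t i : gauge k x t i i = 1.
Proof. unfold gauge. rewrite <- cexp_0. f_equal. ring. Qed.

Lemma gauge_00 k i j : gauge k 0 0 i j = 1.
Proof. unfold gauge, phase. rewrite <- cexp_0. f_equal. ring. Qed.

Lemma gauge_idm k x t i j : gauge k x t i j * idm i j = idm i j.
Proof. unfold idm. destruct (Nat.eqb_spec i j) as [->|]; [rewrite gauge_diag|]; ring. Qed.

Lemma gauge_integral_form k x t i j (A B : C) :
  gauge k x t i j * (idm i j + (cexp (phase k x t * (Lam i - Lam j)) * A
                                + cexp (phase k x t * (Lam i - Lam j)) * B))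
  = idm i j + A + B.
Proof.
  assert (E : gauge k x t i j * cexp (phase k x t * (Lam i - Lam j)) = 1).
  { unfold gauge. rewrite <- cexp_add, <- cexp_0. f_equal. ring. }
  transitivity (gauge k x t i j * idm i j
                + gauge k x t i j * cexp (phase k x t * (Lam i - Lam j)) * (A + B)); [ring|].
  rewrite E, gauge_idm. ring.
Qed.

Lemma hatexp_theta_mmul k x t x' t' (V X : Mat) i j :
  hatexp (theta k x t x' t') (mmul V X) i j
  = cexp (phase k x t * (Lam i - Lam j)) * mmul (gauge_conj k x' t' V) (gauge_conj k x' t' X) i j.
Proof.
  unfold hatexp, gauge_conj, mmul, sum3. rewrite theta_phase.
  replace ((phase k x t - phase k x' t') * (Lam i - Lam j))
    with (phase k x t * (Lam i - Lam j) + - (phase k x' t' * (Lam i - Lam j))) by ring.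
  rewrite cexp_add. fold (gauge k x' t' i j).
  set (g := gauge k x' t').
  transitivity (cexp (phase k x t * (Lam i - Lam j)) *
    ((g i 1%nat * g 1%nat j) * V i 1%nat * X 1%nat j + (g i 2%nat * g 2%nat j) * V i 2%nat * X 2%nat j
     + (g i 3%nat * g 3%nat j) * V i 3%nat * X 3%nat j)).
  - unfold g. rewrite !gauge_mul. ring.
  - ring.
Qed.

Lemma trace_gauge_conj k x t X : trace (gauge_conj k x t X) = trace X.
Proof. unfold trace, gauge_conj. rewrite !gauge_diag. ring. Qed.

Lemma trace_V1 sigma Q1 Q2 x t : trace (V1 sigma Q1 Q2 x t) = 0.
Proof. unfold trace, V1, V1m, mk3. simpl. ring. Qed.

(* The diagonal of [Lambda V1^2] is [sigma (|q1|^2 + |q2|^2) (-1, 1, 1)]. *)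
Lemma trace_V2 sigma k Q1 Q2 x t : trace (V2 sigma k Q1 Q2 x t) = 0.
Proof. unfold trace, V2, V1x, V1, V1m, mk3, mmul, sum3, Lam. simpl. ring. Qed.

Lemma trace_gauged_V1 sigma k Q1 Q2 x t : trace (gauged_V1 sigma k Q1 Q2 x t) = 0.
Proof. unfold gauged_V1. rewrite trace_gauge_conj. apply trace_V1. Qed.

Lemma trace_gauged_V2 sigma k Q1 Q2 x t : trace (gauged_V2 sigma k Q1 Q2 x t) = 0.
Proof. unfold gauged_V2. rewrite trace_gauge_conj. apply trace_V2. Qed.

Lemma gauge_cont_x k L t i j z : (0 <= L)%R -> Ccont (fun y => gauge k (clamp 0 L y) t i j) z.
Proof.
  intros HL. apply (continuous_comp (clamp 0 L) (fun w => gauge k w t i j) z (clamp_cont 0 L z HL)).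
  eapply Ccont_ext;
    [|apply (cexp_affine_cont (- (Ci * k * (Lam i - Lam j)))
                              (- (2 * Ci * k * k * RtoC t * (Lam i - Lam j))))].
  intros y. unfold gauge, phase. f_equal. ring.
Qed.

Lemma gauge_cont_t k T x i j z : (0 <= T)%R -> Ccont (fun s => gauge k x (clamp 0 T s) i j) z.
Proof.
  intros HT. apply (continuous_comp (clamp 0 T) (fun w => gauge k x w i j) z (clamp_cont 0 T z HT)).
  eapply Ccont_ext;
    [|apply (cexp_affine_cont (- (2 * Ci * k * k * (Lam i - Lam j)))
                              (- (Ci * k * RtoC x * (Lam i - Lam j))))].
  intros y. unfold gauge, phase. f_equal. ring.
Qed.

Lemma gauge_conj_MCont_x k L t (X : R -> Mat) z : (0 <= L)%R -> MCont X z ->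
  MCont (fun y => gauge_conj k (clamp 0 L y) t (X y)) z.
Proof. intros HL HX i j Hi Hj. apply Ccont_mult; [apply gauge_cont_x | apply HX]; auto. Qed.

Lemma gauge_conj_MCont_t k T x (X : R -> Mat) z : (0 <= T)%R -> MCont X z ->
  MCont (fun s => gauge_conj k x (clamp 0 T s) (X s)) z.
Proof. intros HT HX i j Hi Hj. apply Ccont_mult; [apply gauge_cont_t | apply HX]; auto. Qed.

End Gauge.

Definition starts_in (L T : R) (start : nat -> nat -> R * R) : Prop :=
  forall i j, inOmega L T (fst (start i j)) (snd (start i j)).

Lemma V1m_cont sigma (q1 q2 : R -> C) z i j :
  Ccont q1 z -> Ccont q2 z -> Ccont (fun y => V1m sigma (q1 y) (q2 y) i j) z.
Proof.
  intros H1 H2. unfold V1m, mk3.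
  destruct i as [|[|[|[|i]]]]; destruct j as [|[|[|[|j]]]];
    try apply Ccont_const; auto;
    apply Ccont_mult; try apply Ccont_const; apply Ccont_conj; auto.
Qed.

Section Integral_equations.

Variables (sigma L T : R) (k : C) (Q1 Q2 : nat -> nat -> R -> R -> C).
Hypothesis HL : (0 < L)%R.
Hypothesis HT : (0 < T)%R.
Hypothesis HQ1 : cont_on L T (Q1 0%nat 0%nat).
Hypothesis HQ2 : cont_on L T (Q2 0%nat 0%nat).
Hypothesis HQ1x : cont_on L T (Q1 1%nat 0%nat).
Hypothesis HQ2x : cont_on L T (Q2 1%nat 0%nat).

Notation W1 := (gauged_V1 sigma k Q1 Q2).
Notation W2 := (gauged_V2 sigma k Q1 Q2).

Lemma gauged_V1_slice_x t z : (0 <= t <= T)%R -> MCont (fun y => W1 (clamp 0 L y) t) z.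
Proof.
  intros Ht. apply gauge_conj_MCont_x; [lra|]. intros i j _ _.
  apply V1m_cont; apply (cont_on_slice_x L T); auto; lra.
Qed.

Lemma gauged_V2_slice_t x z : (0 <= x <= L)%R -> MCont (fun s => W2 x (clamp 0 T s)) z.
Proof.
  intros Hx. apply gauge_conj_MCont_t; [lra|]. intros i j _ _.
  assert (Hq : forall Q, cont_on L T Q -> Ccont (fun s => Q x (clamp 0 T s)) z)
    by (intros; apply (cont_on_slice_t L T); auto; lra).
  unfold V2, V1x, V1, mmul, sum3.
  apply Ccont_plus; apply Ccont_mult; try apply Ccont_const.
  - apply V1m_cont; auto.
  - apply Ccont_minus; [|apply V1m_cont; auto].
    apply Ccont_plus; [apply Ccont_plus|]; apply Ccont_mult; apply V1m_cont; auto.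
Qed.

Lemma gauged_slice_x (M : R -> R -> Mat) t z : (0 <= t <= T)%R -> mcont_on L T M ->
  MCont (fun y => gauged k M (clamp 0 L y) t) z.
Proof.
  intros Ht HM. apply gauge_conj_MCont_x; [lra|]. intros i j Hi Hj.
  apply (cont_on_slice_x L T (fun x t => M x t i j)); auto; lra.
Qed.

Lemma gauged_slice_t (M : R -> R -> Mat) x z : (0 <= x <= L)%R -> mcont_on L T M ->
  MCont (fun s => gauged k M x (clamp 0 T s)) z.
Proof.
  intros Hx HM. apply gauge_conj_MCont_t; [lra|]. intros i j Hi Hj.
  apply (cont_on_slice_t L T (fun x t => M x t i j)); auto; lra.
Qed.

Lemma RIntC_gauge_x (M : R -> R -> Mat) x t t0 a b i j :
  mcont_on L T M -> (0 <= t0 <= T)%R -> (0 <= a <= L)%R -> (0 <= b <= L)%R ->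
  is_index i -> is_index j ->
  RIntC (fun x' => hatexp (theta k x t x' t0) (mmul (V1 sigma Q1 Q2 x' t0) (M x' t0)) i j) a b
  = cexp (phase k x t * (Lam i - Lam j))
    * RIntC (fun x' => mmul (W1 (clamp 0 L x') t0) (gauged k M (clamp 0 L x') t0) i j) a b.
Proof.
  intros HM Ht0 Ha Hb Hi Hj.
  transitivity (RIntC (fun x' => cexp (phase k x t * (Lam i - Lam j))
                                * mmul (W1 x' t0) (gauged k M x' t0) i j) a b).
  { f_equal. apply functional_extensionality. intros x'. apply hatexp_theta_mmul. }
  apply (RIntC_Cmult_ext _ _ _ a b 0 L); auto.
  - intros z. apply (MCont_mmul (fun y => W1 (clamp 0 L y) t0));
      auto using gauged_V1_slice_x, gauged_slice_x.
  - intros u Hu. rewrite clamp_id by exact Hu. reflexivity.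
Qed.

Lemma RIntC_gauge_t (M : R -> R -> Mat) x t x0 a b i j :
  mcont_on L T M -> (0 <= x0 <= L)%R -> (0 <= a <= T)%R -> (0 <= b <= T)%R ->
  is_index i -> is_index j ->
  RIntC (fun t' => hatexp (theta k x t x0 t') (mmul (V2 sigma k Q1 Q2 x0 t') (M x0 t')) i j) a b
  = cexp (phase k x t * (Lam i - Lam j))
    * RIntC (fun t' => mmul (W2 x0 (clamp 0 T t')) (gauged k M x0 (clamp 0 T t')) i j) a b.
Proof.
  intros HM Hx0 Ha Hb Hi Hj.
  transitivity (RIntC (fun t' => cexp (phase k x t * (Lam i - Lam j))
                                * mmul (W2 x0 t') (gauged k M x0 t') i j) a b).
  { f_equal. apply functional_extensionality. intros t'. apply hatexp_theta_mmul. }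
  apply (RIntC_Cmult_ext _ _ _ a b 0 T); auto.
  - intros z. apply (MCont_mmul (fun s => W2 x0 (clamp 0 T s)));
      auto using gauged_V2_slice_t, gauged_slice_t.
  - intros u Hu. rewrite clamp_id by exact Hu. reflexivity.
Qed.

Section Gauged_equation.

Variables (start : nat -> nat -> R * R) (M : R -> R -> Mat).
Hypothesis HM : int_eq sigma L T k Q1 Q2 start M.
Hypothesis Hstart : starts_in L T start.

Lemma int_eq_gauged_x t i j y : (0 <= t <= T)%R -> (0 <= y <= L)%R -> is_index i -> is_index j ->
  gauged k M y t i j = idm i j
    + RIntC (fun s => mmul (W2 (fst (start i j)) (clamp 0 T s))
                           (gauged k M (fst (start i j)) (clamp 0 T s)) i j) (snd (start i j)) t
    + RIntC (fun y' => mmul (W1 (clamp 0 L y') t) (gauged k M (clamp 0 L y') t) i j) (fst (start i j)) y.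
Proof.
  intros Ht Hy Hi Hj. destruct HM as [Hcont Hint], (Hstart i j) as [Hx0 Ht0].
  destruct (Hint y t (conj Hy Ht) i j Hi Hj) as [E _]. cbv zeta in E.
  unfold gauged at 1, gauge_conj. rewrite E, RIntC_gauge_t, RIntC_gauge_x by auto.
  apply gauge_integral_form.
Qed.

Lemma int_eq_gauged_t x i j s : (0 <= x <= L)%R -> (0 <= s <= T)%R -> is_index i -> is_index j ->
  gauged k M x s i j = idm i j
    + RIntC (fun y => mmul (W1 (clamp 0 L y) (snd (start i j)))
                           (gauged k M (clamp 0 L y) (snd (start i j))) i j) (fst (start i j)) x
    + RIntC (fun s' => mmul (W2 x (clamp 0 T s')) (gauged k M x (clamp 0 T s')) i j) (snd (start i j)) s.
Proof.
  intros Hx Hs Hi Hj. destruct HM as [Hcont Hint], (Hstart i j) as [Hx0 Ht0].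
  destruct (Hint x s (conj Hx Hs) i j Hi Hj) as [_ E]. cbv zeta in E.
  unfold gauged at 1, gauge_conj. rewrite E, RIntC_gauge_x, RIntC_gauge_t by auto.
  apply gauge_integral_form.
Qed.

Lemma int_eq_lax_solution : lax_solution L T W1 W2 (gauged k M).
Proof.
  pose proof (proj1 HM) as Hcont.
  split; [|split; [|split]].
  - intros t x Ht Hx i j Hi Hj.
    set (G := fun y => mmul (W1 (clamp 0 L y) t) (gauged k M (clamp 0 L y) t) i j).
    replace (mmul (W1 x t) (gauged k M x t) i j) with (G x)
      by (unfold G; rewrite clamp_id by lra; reflexivity).
    eapply (Cder_RIntC_loc _ G _ (fst (start i j))).
    + intros z. unfold G. apply (MCont_mmul (fun y => W1 (clamp 0 L y) t));
        auto using gauged_V1_slice_x, gauged_slice_x.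
    + generalize (locally_open_interval 0 L x Hx). apply filter_imp. intros y Hy.
      apply int_eq_gauged_x; auto. lra.
  - intros x t Hx Ht i j Hi Hj.
    set (G := fun s => mmul (W2 x (clamp 0 T s)) (gauged k M x (clamp 0 T s)) i j).
    replace (mmul (W2 x t) (gauged k M x t) i j) with (G t)
      by (unfold G; rewrite clamp_id by lra; reflexivity).
    eapply (Cder_RIntC_loc _ G _ (snd (start i j))).
    + intros z. unfold G. apply (MCont_mmul (fun s => W2 x (clamp 0 T s)));
        auto using gauged_V2_slice_t, gauged_slice_t.
    + generalize (locally_open_interval 0 T t Ht). apply filter_imp. intros s Hs.
      apply int_eq_gauged_t; auto. lra.
  - intros t z Ht. apply gauged_slice_x; auto.
  - intros x z Hx. apply gauged_slice_t; auto.
Qed.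

Lemma int_eq_start i j : is_index i -> is_index j -> M (fst (start i j)) (snd (start i j)) i j = idm i j.
Proof.
  intros Hi Hj. destruct HM as [_ Hint].
  destruct (Hint _ _ (Hstart i j) i j Hi Hj) as [E _]. cbv zeta in E.
  rewrite E. unfold RIntC. rewrite !RInt_point.
  change (@zero (CompleteNormedModule.AbelianMonoid R_AbsRing C_R_CompleteNormedModule)) with (RtoC 0).
  ring.
Qed.

End Gauged_equation.

End Integral_equations.

Definition normalized (n c : nat) (Y : Mat) : Prop :=
  forall a b, is_index a -> is_index b -> gamma n a b = c -> Y a b = idm a b.

Section Reconstruction.

Ltac entry H := apply H; [lia | lia | reflexivity].

Ltac meq_cases :=
  let i := fresh "i" in let j := fresh "j" in let Hi := fresh in let Hj := fresh in
  intros i j Hi Hj; destruct (index_cases i Hi) as [-> | [-> | ->]];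
  destruct (index_cases j Hj) as [-> | [-> | ->]]; unfold mk3.

Lemma linear_solve (a y b : C) : a <> 0 -> a * y + b = 0 -> y = - b / a.
Proof.
  intros Ha H. assert (E : a * y = - b).
  { transitivity ((a * y + b) - b); [ring|]. rewrite H. ring. }
  rewrite <- E. field. exact Ha.
Qed.

Lemma S1_reconstruction (A C Y : Mat) :
  det3 A = 1 -> minor A 1 1 <> 0 -> normalized 1 2 C ->
  meq C (mmul A Y) -> normalized 1 4 Y ->
  meq C (mk3 (RtoC 1 / minor A 1 1) (A 1%nat 2%nat) (A 1%nat 3%nat)
             (RtoC 0) (A 2%nat 2%nat) (A 2%nat 3%nat)
             (RtoC 0) (A 3%nat 2%nat) (A 3%nat 3%nat)).
Proof.
  intros Hdet H0 HC0 HC HY.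
  assert (y11 : Y 1%nat 1%nat = 1) by entry HY. assert (y12 : Y 1%nat 2%nat = 0) by entry HY.
  assert (y13 : Y 1%nat 3%nat = 0) by entry HY. assert (y22 : Y 2%nat 2%nat = 1) by entry HY.
  assert (y32 : Y 3%nat 2%nat = 0) by entry HY. assert (y23 : Y 2%nat 3%nat = 0) by entry HY.
  assert (y33 : Y 3%nat 3%nat = 1) by entry HY.
  assert (E21 : C 2%nat 1%nat = 0) by entry HC0. assert (E31 : C 3%nat 1%nat = 0) by entry HC0.
  rewrite HC in E21, E31 by lia. unfold mmul, sum3 in E21, E31. rewrite y11 in E21, E31.
  (* Cramer: the first column of [A Y] is [(C11, 0, 0)], so [C11 * m11(A) = det A]. *)
  assert (K : (A 1%nat 1%nat * 1 + A 1%nat 2%nat * Y 2%nat 1%nat + A 1%nat 3%nat * Y 3%nat 1%nat) * minor A 1 1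
     = det3 A + (A 1%nat 2%nat * A 3%nat 3%nat - A 1%nat 3%nat * A 3%nat 2%nat) *
                (A 2%nat 1%nat * 1 + A 2%nat 2%nat * Y 2%nat 1%nat + A 2%nat 3%nat * Y 3%nat 1%nat)
       + (A 1%nat 3%nat * A 2%nat 2%nat - A 1%nat 2%nat * A 2%nat 3%nat) *
                (A 3%nat 1%nat * 1 + A 3%nat 2%nat * Y 2%nat 1%nat + A 3%nat 3%nat * Y 3%nat 1%nat)).
  { unfold det3, mmul, sum3, adj, cofactor, minor; simpl; ring. }
  rewrite E21, E31, Hdet in K.
  meq_cases; rewrite ?HC by lia; unfold mmul, sum3;
    rewrite ?y11, ?y12, ?y13, ?y22, ?y32, ?y23, ?y33; try ring; try assumption.
  transitivity ((A 1%nat 1%nat * 1 + A 1%nat 2%nat * Y 2%nat 1%nat + A 1%nat 3%nat * Y 3%nat 1%nat)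
                 * minor A 1 1 / minor A 1 1); [field; exact H0|].
  rewrite K. field. exact H0.
Qed.

Lemma S2_reconstruction (s S C Y Z : Mat) :
  det3 s = 1 -> Defs.d2 s S <> 0 ->
  meq C (mmul s Y) -> normalized 2 3 Y -> meq C (mmul S Z) -> normalized 2 1 Z ->
  meq C (mk3 (S 1%nat 1%nat / Defs.d2 s S) (s 1%nat 2%nat) (s 1%nat 3%nat)
             (S 2%nat 1%nat / Defs.d2 s S) (s 2%nat 2%nat) (s 2%nat 3%nat)
             (S 3%nat 1%nat / Defs.d2 s S) (s 3%nat 2%nat) (s 3%nat 3%nat)).
Proof.
  intros Hdet H0 HCs HY HCS HZ.
  assert (y11 : Y 1%nat 1%nat = 1) by entry HY. assert (y12 : Y 1%nat 2%nat = 0) by entry HY.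
  assert (y13 : Y 1%nat 3%nat = 0) by entry HY. assert (y22 : Y 2%nat 2%nat = 1) by entry HY.
  assert (y32 : Y 3%nat 2%nat = 0) by entry HY. assert (y23 : Y 2%nat 3%nat = 0) by entry HY.
  assert (y33 : Y 3%nat 3%nat = 1) by entry HY.
  assert (z21 : Z 2%nat 1%nat = 0) by entry HZ. assert (z31 : Z 3%nat 1%nat = 0) by entry HZ.
  (* pairing the first column of [C] with that of [s^A] in both factorizations *)
  assert (K : Defs.d2 s S * Z 1%nat 1%nat =
     cofactor s 1%nat 1%nat * C 1%nat 1%nat + cofactor s 2%nat 1%nat * C 2%nat 1%nat
     + cofactor s 3%nat 1%nat * C 3%nat 1%nat).
  { rewrite !HCS by lia. unfold Defs.d2, mmul, sum3, transpose. rewrite z21, z31. ring. }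
  rewrite !HCs in K by lia.
  assert (K2 : Defs.d2 s S * Z 1%nat 1%nat = det3 s).
  { rewrite K. unfold det3, mmul, sum3, adj, cofactor, minor. rewrite y11. simpl. ring. }
  rewrite Hdet in K2.
  assert (z11 : Z 1%nat 1%nat = 1 / Defs.d2 s S) by (rewrite <- K2; field; exact H0).
  meq_cases.
  all: try (rewrite HCs by lia; unfold mmul, sum3; rewrite ?y11, ?y12, ?y13, ?y22, ?y32, ?y23, ?y33; ring).
  all: rewrite HCS by lia; unfold mmul, sum3; rewrite z21, z31, z11; field; exact H0.
Qed.

Lemma S3_reconstruction (s S C Y Z : Mat) :
  Defs.d3 s S <> 0 ->
  meq C (mmul s Y) -> normalized 3 3 Y -> meq C (mmul S Z) -> normalized 3 1 Z ->
  meq C (mk3 (s 1%nat 1%nat)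
             ((minor s 3 3 * minor S 2 1 - minor s 2 3 * minor S 3 1) / Defs.d3 s S)
             ((minor s 3 2 * minor S 2 1 - minor s 2 2 * minor S 3 1) / Defs.d3 s S)
             (s 2%nat 1%nat)
             ((minor s 3 3 * minor S 1 1 - minor s 1 3 * minor S 3 1) / Defs.d3 s S)
             ((minor s 3 2 * minor S 1 1 - minor s 1 2 * minor S 3 1) / Defs.d3 s S)
             (s 3%nat 1%nat)
             ((minor s 2 3 * minor S 1 1 - minor s 1 3 * minor S 2 1) / Defs.d3 s S)
             ((minor s 2 2 * minor S 1 1 - minor s 1 2 * minor S 2 1) / Defs.d3 s S)).
Proof.
  intros H0 HCs HY HCS HZ.
  assert (y11 : Y 1%nat 1%nat = 1) by entry HY. assert (y21 : Y 2%nat 1%nat = 0) by entry HY.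
  assert (y31 : Y 3%nat 1%nat = 0) by entry HY. assert (y22 : Y 2%nat 2%nat = 1) by entry HY.
  assert (y32 : Y 3%nat 2%nat = 0) by entry HY. assert (y23 : Y 2%nat 3%nat = 0) by entry HY.
  assert (y33 : Y 3%nat 3%nat = 1) by entry HY.
  assert (z12 : Z 1%nat 2%nat = 0) by entry HZ. assert (z13 : Z 1%nat 3%nat = 0) by entry HZ.
  (* the first row of [adj S * C = adj S * S * Z] vanishes in columns 2 and 3 *)
  assert (K2 : adj S 1%nat 1%nat * C 1%nat 2%nat + adj S 1%nat 2%nat * C 2%nat 2%nat
               + adj S 1%nat 3%nat * C 3%nat 2%nat = 0).
  { rewrite !HCS by lia. unfold adj, cofactor, minor, mmul, sum3. rewrite z12. simpl. ring. }
  assert (K3 : adj S 1%nat 1%nat * C 1%nat 3%nat + adj S 1%nat 2%nat * C 2%nat 3%nat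
               + adj S 1%nat 3%nat * C 3%nat 3%nat = 0).
  { rewrite !HCS by lia. unfold adj, cofactor, minor, mmul, sum3. rewrite z13. simpl. ring. }
  rewrite !HCs in K2, K3 by lia. unfold mmul, sum3 in K2, K3.
  rewrite y22, y32 in K2. rewrite y23, y33 in K3.
  set (X2 := adj S 1%nat 1%nat * s 1%nat 2%nat + adj S 1%nat 2%nat * s 2%nat 2%nat
             + adj S 1%nat 3%nat * s 3%nat 2%nat).
  set (X3 := adj S 1%nat 1%nat * s 1%nat 3%nat + adj S 1%nat 2%nat * s 2%nat 3%nat
             + adj S 1%nat 3%nat * s 3%nat 3%nat).
  assert (a : Y 1%nat 2%nat = - X2 / Defs.d3 s S).
  { apply linear_solve; auto. rewrite <- K2. unfold X2, Defs.d3, adj, mmul, sum3, transpose. ring. }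
  assert (b : Y 1%nat 3%nat = - X3 / Defs.d3 s S).
  { apply linear_solve; auto. rewrite <- K3. unfold X3, Defs.d3, adj, mmul, sum3, transpose. ring. }
  unfold Defs.d3, mmul, sum3, transpose, cofactor, minor in H0; simpl in H0.
  meq_cases; rewrite HCs by lia; unfold mmul, sum3; rewrite ?y11, ?y21, ?y31, ?y22, ?y32, ?y23, ?y33;
    try ring; rewrite ?a, ?b; unfold X2, X3, Defs.d3;
    unfold adj, cofactor, minor, mmul, sum3, transpose; simpl; field; exact H0.
Qed.

Lemma S4_reconstruction (A C Y : Mat) :
  A 1%nat 1%nat <> 0 -> normalized 4 2 C -> meq C (mmul A Y) -> normalized 4 4 Y ->
  meq C (mk3 (A 1%nat 1%nat) (RtoC 0) (RtoC 0)
             (A 2%nat 1%nat) (minor A 3 3 / A 1%nat 1%nat) (minor A 3 2 / A 1%nat 1%nat)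
             (A 3%nat 1%nat) (minor A 2 3 / A 1%nat 1%nat) (minor A 2 2 / A 1%nat 1%nat)).
Proof.
  intros H0 HC0 HC HY.
  assert (y11 : Y 1%nat 1%nat = 1) by entry HY. assert (y21 : Y 2%nat 1%nat = 0) by entry HY.
  assert (y31 : Y 3%nat 1%nat = 0) by entry HY. assert (y22 : Y 2%nat 2%nat = 1) by entry HY.
  assert (y32 : Y 3%nat 2%nat = 0) by entry HY. assert (y23 : Y 2%nat 3%nat = 0) by entry HY.
  assert (y33 : Y 3%nat 3%nat = 1) by entry HY.
  assert (E12 : C 1%nat 2%nat = 0) by entry HC0. assert (E13 : C 1%nat 3%nat = 0) by entry HC0.
  rewrite HC in E12, E13 by lia. unfold mmul, sum3 in E12, E13.
  rewrite y22, y32 in E12. rewrite y23, y33 in E13.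
  assert (a : Y 1%nat 2%nat = - A 1%nat 2%nat / A 1%nat 1%nat).
  { apply linear_solve; auto. rewrite <- E12. ring. }
  assert (b : Y 1%nat 3%nat = - A 1%nat 3%nat / A 1%nat 1%nat).
  { apply linear_solve; auto. rewrite <- E13. ring. }
  meq_cases; rewrite ?HC by lia; unfold mmul, sum3; try assumption;
    rewrite ?y11, ?y21, ?y31, ?y22, ?y32, ?y23, ?y33, ?a, ?b; unfold minor; simpl; field; exact H0.
Qed.

End Reconstruction.

Lemma corner_in L T j : (0 < L)%R -> (0 < T)%R -> inOmega L T (fst (corner L T j)) (snd (corner L T j)).
Proof. intros. unfold inOmega. destruct j as [|[|[|[|j]]]]; simpl; lra. Qed.

Section Spectral_relations.

Variables (sigma L T : R) (k : C) (Q1 Q2 : nat -> nat -> R -> R -> C).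
Hypothesis HL : (0 < L)%R.
Hypothesis HT : (0 < T)%R.
Hypothesis HQ1 : cont_on L T (Q1 0%nat 0%nat).
Hypothesis HQ2 : cont_on L T (Q2 0%nat 0%nat).
Hypothesis HQ1x : cont_on L T (Q1 1%nat 0%nat).
Hypothesis HQ2x : cont_on L T (Q2 1%nat 0%nat).

Variable mu2 : R -> R -> Mat.
Hypothesis Hmu2 : is_mu sigma L T k Q1 Q2 2 mu2.

Notation N2 := (gauged k mu2).
Notation at_corner F j := (F (fst (corner L T j)) (snd (corner L T j))).

Lemma corners_in j : starts_in L T (fun _ _ => corner L T j).
Proof. intros a b. apply corner_in; assumption. Qed.

Lemma gamma_corners_in n : starts_in L T (fun a b => corner L T (gamma n a b)).
Proof. intros a b. apply corner_in; assumption. Qed.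

Lemma gauged_mu_corner j X : is_mu sigma L T k Q1 Q2 j X -> meq (at_corner (gauged k X) j) idm.
Proof.
  intros HX a b Ha Hb. unfold gauged, gauge_conj.
  rewrite (int_eq_start sigma L T k Q1 Q2 _ X HX (corners_in j) a b Ha Hb). apply gauge_idm.
Qed.

Lemma N2_origin : meq (N2 0%R 0%R) idm.
Proof. exact (gauged_mu_corner 2 mu2 Hmu2). Qed.

Lemma gauged_lax start X : int_eq sigma L T k Q1 Q2 start X -> starts_in L T start ->
  lax_solution L T (gauged_V1 sigma k Q1 Q2) (gauged_V2 sigma k Q1 Q2) (gauged k X).
Proof. apply int_eq_lax_solution; assumption. Qed.

Let trace_W1 x t (_ : (0 <= x <= L)%R) (_ : (0 <= t <= T)%R) := trace_gauged_V1 sigma k Q1 Q2 x t.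
Let trace_W2 x t (_ : (0 <= x <= L)%R) (_ : (0 <= t <= T)%R) := trace_gauged_V2 sigma k Q1 Q2 x t.

(* [adj N2] inverts every gauged eigenfunction up to its value at the origin, where [N2 = I]. *)
Lemma adj_N2_mul start X : int_eq sigma L T k Q1 Q2 start X -> starts_in L T start ->
  forall x t, inOmega L T x t -> meq (mmul (adj (N2 x t)) (gauged k X x t)) (X 0%R 0%R).
Proof.
  intros HX Hs x t [Hx Ht] a b Ha Hb.
  rewrite (lax_adj_mul_const L T _ _ HL HT trace_W1 trace_W2 N2 (gauged k X)
             (gauged_lax _ _ Hmu2 (corners_in 2)) (gauged_lax _ _ HX Hs) x t a b Hx Ht Ha Hb).
  rewrite (mmul_meq_l _ idm) by (auto using adj_meq_idm, N2_origin).
  rewrite mmul_idm_l by exact Ha. unfold gauged, gauge_conj. rewrite gauge_00. ring.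
Qed.

Lemma mu_origin_adj j X : is_mu sigma L T k Q1 Q2 j X -> meq (X 0%R 0%R) (adj (at_corner N2 j)).
Proof.
  intros HX a b Ha Hb.
  rewrite <- (adj_N2_mul _ X HX (corners_in j) _ _ (corner_in L T j HL HT) a b Ha Hb).
  rewrite (mmul_meq_r _ _ idm) by (auto using gauged_mu_corner). apply mmul_idm_r, Hb.
Qed.

(* [det X(0,0) = det (adj N2(c_j)) = (det N2(c_j))^2], and [det N2] is constant (Liouville). *)
Lemma det_mu_origin j X : is_mu sigma L T k Q1 Q2 j X -> det3 (X 0%R 0%R) = 1.
Proof.
  intros HX. destruct (corner_in L T j HL HT) as [Hx Ht].
  rewrite (det3_meq _ _ (mu_origin_adj j X HX)), det3_adj.
  rewrite (lax_det_const L T _ _ HL HT trace_W1 trace_W2 N2 (gauged_lax _ _ Hmu2 (corners_in 2)) _ _ Hx Ht).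
  rewrite (det3_meq _ _ N2_origin), det3_idm. ring.
Qed.

Lemma M_origin_factor n M j X : is_M sigma L T k Q1 Q2 n M -> is_mu sigma L T k Q1 Q2 j X ->
  meq (M 0%R 0%R) (mmul (X 0%R 0%R) (at_corner (gauged k M) j)).
Proof.
  intros HM HX a b Ha Hb.
  rewrite <- (adj_N2_mul _ M HM (gamma_corners_in n) _ _ (corner_in L T j HL HT) a b Ha Hb).
  symmetry. apply mmul_meq_l; [apply (mu_origin_adj j X HX) | exact Ha].
Qed.

Lemma gauged_M_corner_normalized n M j : is_M sigma L T k Q1 Q2 n M ->
  normalized n j (at_corner (gauged k M) j).
Proof.
  intros HM a b Ha Hb Hg.
  pose proof (int_eq_start sigma L T k Q1 Q2 _ M HM (gamma_corners_in n) a b Ha Hb) as E.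
  cbv beta in E. rewrite Hg in E.
  unfold gauged, gauge_conj. rewrite E. apply gauge_idm.
Qed.

Lemma M_origin_normalized n M : is_M sigma L T k Q1 Q2 n M -> normalized n 2 (M 0%R 0%R).
Proof.
  intros HM a b Ha Hb Hg.
  pose proof (int_eq_start sigma L T k Q1 Q2 _ M HM (gamma_corners_in n) a b Ha Hb) as E.
  cbv beta in E. rewrite Hg in E. exact E.
Qed.

(* Evaluate [adj N2 * gauged mu4] at [c_3 = (L, 0)], where [adj N2] is [mu3(0,0)]. *)
Lemma Amat_mu4_origin mu3 mu4 : is_mu sigma L T k Q1 Q2 3 mu3 -> is_mu sigma L T k Q1 Q2 4 mu4 ->
  meq (mu4 0%R 0%R) (Amat k L (mu3 0%R 0%R) (mu4 L 0%R)).
Proof.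
  intros Hmu3 Hmu4 a b Ha Hb.
  rewrite <- (adj_N2_mul _ mu4 Hmu4 (corners_in 4) L 0%R (corner_in L T 3 HL HT) a b Ha Hb).
  transitivity (mmul (mu3 0%R 0%R) (gauged k mu4 L 0%R) a b).
  { symmetry. apply mmul_meq_l; [exact (mu_origin_adj 3 mu3 Hmu3) | exact Ha]. }
  apply mmul_meq_r; [|exact Hb]. intros c d _ _.
  unfold gauged, gauge_conj, hatexp, gauge, phase. f_equal. f_equal. ring.
Qed.

Lemma spectral_matrix_formula n M mu1 mu3 mu4 :
  is_mu sigma L T k Q1 Q2 1 mu1 -> is_mu sigma L T k Q1 Q2 3 mu3 -> is_mu sigma L T k Q1 Q2 4 mu4 ->
  (1 <= n <= 4)%nat -> is_M sigma L T k Q1 Q2 n M ->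
  denom n k L (mu3 0%R 0%R) (mu1 0%R 0%R) (mu4 L 0%R) <> 0 ->
  meq (M 0%R 0%R) (Sformula n k L (mu3 0%R 0%R) (mu1 0%R 0%R) (mu4 L 0%R)).
Proof.
  intros Hmu1 Hmu3 Hmu4 Hn HM Hden.
  assert (HA : meq (M 0%R 0%R) (mmul (Amat k L (mu3 0%R 0%R) (mu4 L 0%R)) (at_corner (gauged k M) 4))).
  { intros a b Ha Hb. rewrite (M_origin_factor n M 4 mu4 HM Hmu4 a b Ha Hb).
    apply mmul_meq_l; [apply Amat_mu4_origin | ]; assumption. }
  destruct n as [|[|[|[|[|n]]]]]; try lia.
  - apply (S1_reconstruction _ _ (at_corner (gauged k M) 4));
      auto using M_origin_normalized, gauged_M_corner_normalized.
    rewrite <- (det3_meq _ _ (Amat_mu4_origin mu3 mu4 Hmu3 Hmu4)). apply (det_mu_origin 4 mu4 Hmu4).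
  - apply (S2_reconstruction _ _ _ (at_corner (gauged k M) 3) (at_corner (gauged k M) 1));
      eauto using det_mu_origin, M_origin_factor, gauged_M_corner_normalized.
  - apply (S3_reconstruction _ _ _ (at_corner (gauged k M) 3) (at_corner (gauged k M) 1));
      eauto using M_origin_factor, gauged_M_corner_normalized.
  - apply (S4_reconstruction _ _ (at_corner (gauged k M) 4));
      auto using M_origin_normalized, gauged_M_corner_normalized.
Qed.

End Spectral_relations.

Theorem mainTheorem2
  (sigma L T : R) (Q1 Q2 : nat -> nat -> R -> R -> C)
  (mu1 mu2 mu3 mu4 : R -> R -> Mat) (n : nat) (k : C) (M : R -> R -> Mat) :
  (sigma = 1%R \/ sigma = (-1)%R) -> (0 < L)%R -> (0 < T)%R ->
  smooth_on L T Q1 -> smooth_on L T Q2 -> nls_system sigma L T Q1 Q2 ->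
  is_mu sigma L T k Q1 Q2 1 mu1 -> is_mu sigma L T k Q1 Q2 2 mu2 ->
  is_mu sigma L T k Q1 Q2 3 mu3 -> is_mu sigma L T k Q1 Q2 4 mu4 ->
  (1 <= n <= 4)%nat -> inD n k ->
  is_M sigma L T k Q1 Q2 n M ->
  denom n k L (mu3 0%R 0%R) (mu1 0%R 0%R) (mu4 L 0%R) <> RtoC 0 ->
  meq (M 0%R 0%R) (Sformula n k L (mu3 0%R 0%R) (mu1 0%R 0%R) (mu4 L 0%R)).
Proof.
  intros _ HL HT HQ1 HQ2 _ Hmu1 Hmu2 Hmu3 Hmu4 Hn _ HM Hden.
  apply (spectral_matrix_formula sigma L T k Q1 Q2 HL HT
           (proj1 (HQ1 0%nat 0%nat)) (proj1 (HQ2 0%nat 0%nat))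
           (proj1 (HQ1 1%nat 0%nat)) (proj1 (HQ2 1%nat 0%nat)) mu2 Hmu2);
    assumption.
Qed.
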